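(* Let $p_j>0$, $q_{j+1}>0$, $r_j\ge 0$ ($j\ge 0$) be the one-step transition probabilities of a random walk on $\mathcal{N}=\{0,1,2,\dots\}$ (up-step $p_j$, holding $r_j$, down-step $q_j$ from state $j$), with $q_0:=0$ and $p_j+q_j+r_j=1$ for all $j\ge0$. Let $\pi_0:=1$, $\pi_n:=\frac{p_0\cdots p_{n-1}}{q_1\cdots q_n}$ ($n\ge1$), and define polynomials $Q_n$ by $Q_0(x)=1$, $p_0Q_1(x)=x-r_0$, and $xQ_n(x)=q_nQ_{n-1}(x)+r_nQ_n(x)+p_nQ_{n+1}(x)$ for $n\ge 1$. Let $\psi$ be the unique Borel probability measure on $[-1,1]$ with infinite support with respect to which the $Q_n$ are orthogonal, and let $\eta:=\sup\operatorname{supp}(\psi)$. If \[\sum_{j\ge 0}\frac{1}{p_j\pi_j}\sum_{k=0}^j r_k\pi_k=\infty,\] then $\lim_{n\to\infty}|Q_n(-\eta)/Q_n(\eta)|=\infty$.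
   Context: It is known that $\eta>0$ and that $Q_n(x)>0$ for all $n\ge0$ whenever $x\ge\eta$. *)

From HB Require Import structures.
From mathcomp Require Import all_boot all_order all_algebra.
From mathcomp Require Import all_classical all_reals all_analysis.
Set Implicit Arguments. Unset Strict Implicit. Unset Printing Implicit Defensive.
Import Order.TTheory GRing.Theory Num.Theory.
Import numFieldNormedType.Exports.
Local Open Scope classical_set_scope.
Local Open Scope ring_scope.

Definition pi_rw {R : realType} (p q : nat -> R) (n : nat) : R :=
  (\prod_(i < n) p i) / (\prod_(i < n) q i.+1).

Fixpoint Qpair {R : realType} (p q r : nat -> R) (x : R) (n : nat) : R * R :=
  match n with
  | 0 => (1, (x - r 0) / p 0)
  | m.+1 => let: (a, b) := Qpair p q r x m in
            (b, ((x - r m.+1) * b - q m.+1 * a) / p m.+1)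
  end.

Definition Qpoly {R : realType} (p q r : nat -> R) (n : nat) (x : R) : R :=
  (Qpair p q r x n).1.

Definition msupport {R : realType} (mu : set R -> \bar R) : set R :=
  [set x | forall e : R, 0 < e -> (0 < mu (ball x e))%E].

From HB Require Import structures.
From mathcomp Require Import all_boot all_order all_algebra.
From mathcomp Require Import all_classical all_reals all_analysis.
From mathcomp Require Import measurable_realfun lra ring zify.
Import Order.TTheory GRing.Theory Num.Theory.
Import numFieldNormedType.Exports.
Local Open Scope classical_set_scope.
Local Open Scope ring_scope.

(* Write a_n = Q_n(eta) and b_n = (-1)^n Q_n(-eta).  Multiplying the recurrence
   by pi_n and telescoping gives
     pi_n p_n (a_(n+1) - a_n) = (eta - 1) sum_(k<=n) pi_k a_k,
     pi_n p_n (a_n b_(n+1) - b_n a_(n+1)) = 2 sum_(k<=n) r_k pi_k a_k b_k.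
   As a_n > 0 and eta <= 1, the first identity makes a_n nonincreasing, and the
   second then yields b_n >= (1 + 2 S_n) a_n by induction, where S_n are the
   partial sums of the divergent series; so |Q_n(-eta) / Q_n(eta)| >= 1 + 2 S_n.
   Positivity of a_n comes from orthogonality: a zero y >= eta of Q_n factors
   it as (X - y) S with deg S < n, and then 0 = - int Q_n S dpsi
   = int (y - x) S(x)^2 dpsi(x) > 0, because the integrand is nonnegative on
   [-1, eta], which carries psi, and positive near a support point where
   Q_n does not vanish.  Since Q_n(1) = 1, the intermediate value theorem
   gives Q_n(eta) > 0. *)

Section MeasureSupport.
Context {R : realType}.
Variable mu : {measure set R -> \bar R}.

Lemma msupport_nbhs_gt0 {x : R} {U : set R} :
  msupport mu x -> measurable U -> nbhs x U -> (0 < mu U)%E.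
Proof.
move=> supp_x mU /(@nbhs_ballP R R)[e e_gt0 ballU]; apply: lt_le_trans (supp_x e e_gt0) _.
by apply: le_measure => //; rewrite inE //; exact: measurable_ball.
Qed.

Lemma msupport_sub (D : set R) : closed D -> mu (~` D) = 0%E -> msupport mu `<=` D.
Proof.
move=> cD CD_null x supp_x; apply: contrapT => Dx.
suff : (0 < mu (~` D))%E by rewrite CD_null ltxx.
apply: msupport_nbhs_gt0 supp_x (measurableC (closed_measurable cD)) _.
by apply: open_nbhs_nbhs; split; rewrite ?openC.
Qed.

Lemma msupport_le {t : R} :
  mu `]t, +oo[%classic = 0%E -> msupport mu `<=` [set x | x <= t].
Proof.
move=> right_null x supp_x /=; rewrite leNgt; apply/negP => tx.
suff : (0 < mu `]t, +oo[%classic)%E by rewrite right_null ltxx.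
apply: msupport_nbhs_gt0 supp_x (measurable_itv _) _; apply: open_nbhs_nbhs; split.
  exact: itv_open_ends_open.
by rewrite /= in_itv /= tx.
Qed.

Lemma measure_itvoy_eq0_le (s t : R) :
  s <= t -> mu `]s, +oo[%classic = 0%E -> mu `]t, +oo[%classic = 0%E.
Proof.
move=> st; apply: subset_measure0 => // x /=; rewrite !in_itv /= !andbT.
exact: le_lt_trans.
Qed.

Lemma measure_itvoy_eq0_right (t : R) :
  (forall s, t < s -> mu `]s, +oo[%classic = 0%E) -> mu `]t, +oo[%classic = 0%E.
Proof.
move=> null_right.
have : mu.-negligible (\bigcup_k `]t + k.+1%:R^-1, +oo[%classic).
  apply: negligible_bigcup => k; exists `]t + k.+1%:R^-1, +oo[%classic; split => //.
  by apply: null_right; rewrite ltrDl invr_gt0 ltr0n.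
move=> [N [mN N0 sub]]; apply: subset_measure0 N0 => // x /=.
rewrite in_itv /= andbT => /ltr_add_invr[k tkx].
by apply: sub; exists k => //=; rewrite in_itv /= andbT.
Qed.

Lemma measure_itvoy_eq0_left {t : R} : ~ msupport mu t ->
  mu `]t, +oo[%classic = 0%E -> exists2 e, 0 < e & mu `]t - e, +oo[%classic = 0%E.
Proof.
move=> /existsNP[e /not_implyP[e_gt0 /negP]].
rewrite -leNgt le_eqVlt ltNge measure_ge0 orbF => /eqP ball_null right_null. exists (e / 2); first by rewrite divr_gt0.
apply: subset_measure0 (_ : _ `<=` ball t e `|` `]t, +oo[%classic) _ => //.
- by apply: measurableU; [exact: measurable_ball|exact: measurable_itv].
- move=> x /=; rewrite !in_itv /= !andbT => tex; case: (ltP t x) => tx; [by right|left].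
  by rewrite -ball_normE /= ger0_norm; lra.
- by rewrite -ball_null; apply: measureU0 => //; exact: measurable_ball.
Qed.

Lemma measure_gt_sup_msupport (b : R) : msupport mu !=set0 ->
  mu `]b, +oo[%classic = 0%E -> mu `]sup (msupport mu), +oo[%classic = 0%E.
Proof.
move=> supp_ne b_null; set eta := sup (msupport mu).
set A := [set t | mu `]t, +oo[%classic = 0%E].
have eta_lbA : lbound A eta by move=> t /msupport_le supp_le; apply: ge_sup.
have A_inf : has_inf A by split; [exists b | exists eta].
have infA_null : mu `]inf A, +oo[%classic = 0%E.
  apply: measure_itvoy_eq0_right => s infA_s.
  have [t At] : exists2 t, A t & t < inf A + (s - inf A).
    by apply: inf_adherent; rewrite ?subr_gt0.
  by rewrite addrC subrK => /ltW ts; apply: measure_itvoy_eq0_le At.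
suff : inf A <= eta by move/measure_itvoy_eq0_le; apply.
rewrite leNgt; apply/negP => eta_infA.
have infA_supp : ~ msupport mu (inf A).
  by move=> /(ub_le_sup (ex_intro _ b (msupport_le b_null))); rewrite leNgt eta_infA.
have [e e_gt0 left_null] := measure_itvoy_eq0_left infA_supp infA_null.
by have := ge_inf (proj2 A_inf) left_null; lra.
Qed.

End MeasureSupport.

Section IntegralSupport.
Context {R : realType}.
Variable mu : {measure set R -> \bar R}.

Lemma integral_setC_null (D : set R) (f : R -> \bar R) :
  measurable D -> mu (~` D) = 0%E -> measurable_fun setT f ->
  (\int[mu]_x f x = \int[mu]_(x in D) f x)%E.
Proof.
move=> mD CD_null mf; have mCD := measurableC mD.
rewrite -(setUv D) integral_setU ?setUv //; last exact/disj_setPCl.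
by rewrite (null_set_integral mCD) ?adde0 //; exact: measurable_funS mf.
Qed.

Lemma integral_gt0_msupport (D : set R) (h : R -> R) x0 :
  measurable D -> mu (~` D) = 0%E -> continuous h ->
  (forall x, D x -> 0 <= h x) -> msupport mu x0 -> 0 < h x0 ->
  (0 < \int[mu]_(x in D) (h x)%:E)%E.
Proof.
move=> mD CD_null ch h_ge0 supp_x0 hx0_gt0; set k := h x0 / 2.
have k_gt0 : 0 < k by rewrite divr_gt0.
have /(@nbhs_ballP R R)[e e_gt0 ball_gt] : \forall x \near x0, k < h x.
  by apply: (cvgr_gt (h x0) (ch x0)); rewrite /k; lra.
set B := ball x0 e; have mB : measurable B := measurable_ball x0 e.
have BD_gt0 : (0 < mu (B `&` D))%E.
  have BCD_null : mu (B `\` D) = 0%E.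
    by apply: subset_measure0 CD_null => //; [exact: measurableD|exact: measurableC].
  have splitB : mu B = (mu (B `\` D) + mu (B `&` D))%E := measureDI mu mB mD.
  by have := supp_x0 e e_gt0; rewrite -/B splitB BCD_null add0e.
have indic_le : (\int[mu]_(x in D) (k * \1_B x)%:E <= \int[mu]_(x in D) (h x)%:E)%E.
  apply: ge0_le_integral => //.
  - by move=> x _; rewrite lee_fin mulr_ge0 ?(ltW k_gt0) // indicE; case: (_ \in _).
  - by apply/measurable_EFinP; apply: measurable_funM => //; exact: measurable_indic.
  - by apply/measurable_EFinP; exact: measurable_funS (continuous_measurable_fun ch).
  - move=> x Dx; rewrite lee_fin indicE; have [Bx|nBx] := pselect (B x).
      by rewrite mem_set // mulr1 ltW // ball_gt.
    by rewrite memNset // mulr0 h_ge0.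
apply: lt_le_trans indic_le; rewrite (integralZl_indic mD (fun=> B)) //.
  by rewrite integral_indic // mule_gt0.
by move=> k_lt0; have := lt_trans k_gt0 k_lt0; rewrite ltxx.
Qed.

End IntegralSupport.

Lemma norm_horner_le_sum_coef (R : numDomainType) (P : {poly R}) (x : R) :
  `|x| <= 1 -> `|P.[x]| <= \sum_(i < size P) `|P`_i|.
Proof.
move=> x_le1; rewrite horner_coef; apply: le_trans (ler_norm_sum _ _ _) _.
apply: ler_sum => i _; rewrite normrM normrX ler_piMr // exprn_ile1 //.
Qed.

Lemma integrable_horner (R : realType) (psi : probability R R) (D : set R)
    (P : {poly R}) :
  measurable D -> D `<=` `[-1, 1] -> psi.-integrable D (fun x => (P.[x])%:E).
Proof.
move=> mD D_sub; apply: (measurable_bounded_integrable (f := horner P)) => //.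
- exact: le_lt_trans (probability_le1 psi mD) (ltey _).
- apply: measurable_funS (continuous_measurable_fun _) => //; exact: continuous_horner.
- exists (\sum_(i < size P) `|P`_i|); split; first exact: num_real.
  move=> M PM x /D_sub /=; rewrite in_itv /= => x_le1.
  by apply/ltW/(le_lt_trans _ PM)/norm_horner_le_sum_coef; rewrite ler_norml.
Qed.

Section ThreeTermRecurrence.
Context {R : realType}.
Variables p q r : nat -> R.
Hypothesis p_gt0 : forall j, 0 < p j.
Hypothesis q_gt0 : forall j, 0 < q j.+1.
Hypothesis q0 : q 0 = 0.
Hypothesis pqr1 : forall j, p j + q j + r j = 1.
Hypothesis r_ge0 : forall j, 0 <= r j.

Local Notation Q := (Qpoly p q r).
Local Notation pi := (pi_rw p q).

(* [Qalt] solves the recurrence with [r] replaced by [-r] ([QaltSS]); this is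
   why only the [r k] enter its Casoratian with [Q]. *)
Definition Qalt n x := (-1) ^+ n * Q n (- x).

Definition pi_series N :=
  \sum_(0 <= j < N) (p j * pi j)^-1 * \sum_(0 <= k < j.+1) r k * pi k.

Lemma Qpoly0 x : Q 0 x = 1.
Proof. by []. Qed.

Lemma Qpoly1 x : p 0 * Q 1 x = x - r 0.
Proof. by rewrite /Qpoly /= mulrC divfK // lt0r_neq0. Qed.

Lemma QpolySS x n :
  p n.+1 * Q n.+2 x = (x - r n.+1) * Q n.+1 x - q n.+1 * Q n x.
Proof.
rewrite /Qpoly /=; case: (Qpair p q r x n) => a b /=.
by rewrite mulrC divfK // lt0r_neq0.
Qed.

Lemma Qalt1 x : p 0 * Qalt 1 x = x + r 0.
Proof. rewrite /Qalt expr1 mulrCA Qpoly1; ring. Qed.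

Lemma QaltSS x n :
  p n.+1 * Qalt n.+2 x = (x + r n.+1) * Qalt n.+1 x - q n.+1 * Qalt n x.
Proof. rewrite /Qalt mulrCA QpolySS !exprS; ring. Qed.

Lemma pi_rw0 : pi 0 = 1.
Proof. by rewrite /pi_rw !big_ord0 divr1. Qed.

Lemma pi_rw_gt0 n : 0 < pi n.
Proof. by rewrite /pi_rw divr_gt0 //; apply: prodr_gt0. Qed.

Lemma pi_rwS n : pi n.+1 * q n.+1 = pi n * p n.
Proof.
have qn_neq0 : q n.+1 != 0 by rewrite lt0r_neq0.
have prodq_neq0 : \prod_(i < n) q i.+1 != 0 by rewrite lt0r_neq0 // prodr_gt0.
by rewrite /pi_rw !big_ord_recr /=; field; rewrite prodq_neq0 qn_neq0.
Qed.

Fixpoint polyQpair n : {poly R} * {poly R} :=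
  match n with
  | 0 => (1, (p 0)^-1 *: ('X - (r 0)%:P))
  | m.+1 => let: (a, b) := polyQpair m in
            (b, (p m.+1)^-1 *: (('X - (r m.+1)%:P) * b - (q m.+1)%:P * a))
  end.

Definition polyQ n := (polyQpair n).1.

Lemma horner_polyQ n x : (polyQ n).[x] = Q n x.
Proof.
suff : (polyQpair n).1.[x] = (Qpair p q r x n).1 /\
       (polyQpair n).2.[x] = (Qpair p q r x n).2 by case.
elim: n => [|n] /=; first by rewrite hornerZ !hornerE mulrC.
case: (polyQpair n) (Qpair p q r x n) => [A B] [a b] /= [Ax Bx]; split => //.
by rewrite hornerZ !hornerE Ax Bx mulrC.
Qed.

Lemma size_polyQ n : size (polyQ n) = n.+1.
Proof.
suff : size (polyQpair n).1 = n.+1 /\ size (polyQpair n).2 = n.+2 by case.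
have pV_neq0 j : (p j)^-1 != 0 by rewrite invr_eq0 lt0r_neq0.
elim: n => [|n] /=; first by rewrite size_poly1 size_scale // size_XsubC.
case: (polyQpair n) => A B /= [sizeA sizeB]; split => //.
have B_neq0 : B != 0 by rewrite -size_poly_eq0 sizeB.
have sizeXB : size (('X - (r n.+1)%:P) * B) = n.+3.
  by rewrite size_mul ?polyXsubC_eq0 // size_XsubC sizeB.
rewrite size_scale // size_addl sizeXB // size_opp.
apply: leq_ltn_trans (size_polyMleq _ _) _; rewrite sizeA size_polyC.
by case: (q n.+1 != 0) => /=; lia.
Qed.

Lemma continuous_Qpoly n : continuous (Q n).
Proof.
have -> : Q n = horner (polyQ n) by apply/funext => x; rewrite horner_polyQ.
exact: continuous_horner.
Qed.

(* Telescoping with the weights [pi], which symmetrize the recurrence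
   ([pi_rwS]); the constant [1] solves it at [x = 1]. *)
Lemma Qpoly_increment x n :
  pi n * p n * (Q n.+1 x - Q n x) = (x - 1) * \sum_(0 <= k < n.+1) pi k * Q k x.
Proof.
elim: n => [|n IH].
  by rewrite big_nat1 pi_rw0 Qpoly0; have := Qpoly1 x; have := pqr1 0; rewrite q0; lra.
rewrite big_nat_recr //=; move: IH.
have E1 := congr1 ( *%R (pi n.+1)) (QpolySS x n).
have E2 := congr1 ( *%R^~ (Q n.+1 x)) (pi_rwS n).
have E3 := congr1 ( *%R^~ (Q n x)) (pi_rwS n).
have E4 := congr1 (fun t => pi n.+1 * t * Q n.+1 x) (pqr1 n.+1).
simpl in *; lra.
Qed.

Lemma Qpoly_at1 n : Q n 1 = 1.
Proof.
elim: n => [|n IH] //; have := Qpoly_increment 1 n; rewrite subrr mul0r IH.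
have pip_gt0 : 0 < pi n * p n by rewrite mulr_gt0 ?pi_rw_gt0.
by move/eqP; rewrite mulf_eq0 gt_eqF //= subr_eq0 => /eqP.
Qed.

Lemma Qpoly_Qalt_casoratian x n :
  pi n * p n * (Q n x * Qalt n.+1 x - Qalt n x * Q n.+1 x) =
  2 * \sum_(0 <= k < n.+1) r k * pi k * Q k x * Qalt k x.
Proof.
elim: n => [|n IH].
  rewrite big_nat1 pi_rw0 Qpoly0 /Qalt expr0 mul1r Qpoly0.
  by have := Qpoly1 x; have := Qalt1 x; rewrite /Qalt expr1; lra.
rewrite big_nat_recr //=; move: IH.
have E1 := congr1 ( *%R (pi n.+1 * Q n.+1 x)) (QaltSS x n).
have E2 := congr1 ( *%R (pi n.+1 * Qalt n.+1 x)) (QpolySS x n).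
have E3 := congr1 (fun t => t * Q n.+1 x * Qalt n x) (pi_rwS n).
have E4 := congr1 (fun t => t * Qalt n.+1 x * Q n x) (pi_rwS n).
simpl in *; lra.
Qed.

Lemma pi_series_ge0 N : 0 <= pi_series N.
Proof.
apply: sumr_ge0 => j _; have pip_gt0 : 0 < p j * pi j by rewrite mulr_gt0 ?pi_rw_gt0.
rewrite mulr_ge0 ?invr_ge0 ?(ltW pip_gt0) //.
by apply: sumr_ge0 => k _; rewrite mulr_ge0 // ltW ?pi_rw_gt0.
Qed.

Section PositiveAt.
Variable x : R.
Hypothesis x_le1 : x <= 1.
Hypothesis Qpoly_gt0 : forall n, 0 < Q n x.

Lemma Qpoly_nonincreasing m n : (m <= n)%N -> Q n x <= Q m x.
Proof.
move=> /subnK <-; elim: (n - m)%N => [|k IH] //=; rewrite addSn (le_trans _ IH) //.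
have pip_gt0 : 0 < pi (k + m) * p (k + m) by rewrite mulr_gt0 ?pi_rw_gt0.
have sum_ge0 : 0 <= \sum_(0 <= i < (k + m).+1) pi i * Q i x.
  by apply: sumr_ge0 => i _; rewrite mulr_ge0 // ltW ?pi_rw_gt0.
by rewrite -subr_le0 -(pmulr_rle0 _ pip_gt0) Qpoly_increment mulr_le0_ge0 ?subr_le0.
Qed.

Lemma Qalt_ge_pi_series n : Q n x * (1 + 2 * pi_series n) <= Qalt n x.
Proof.
elim/ltn_ind: n => -[_|n IH].
  by rewrite /pi_series big_geq // /Qalt Qpoly0 expr0 Qpoly0; lra.
have Qalt_ge k : (k <= n)%N -> Q k x <= Qalt k x.
  move=> kn; apply: le_trans (IH k kn); have := pi_series_ge0 k; have := Qpoly_gt0 k; nra.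
set P := pi n * p n; set T := \sum_(0 <= k < n.+1) r k * pi k.
have P_gt0 : 0 < P by rewrite mulr_gt0 ?pi_rw_gt0.
have T_ge0 : 0 <= T by apply: sumr_ge0 => i _; rewrite mulr_ge0 // ltW ?pi_rw_gt0.
have casoratian_ge : 2 * (Q n x * Q n.+1 x * T) <=
    P * (Q n x * Qalt n.+1 x - Qalt n x * Q n.+1 x).
  rewrite Qpoly_Qalt_casoratian ler_pM2l // /T mulr_sumr big_nat [leRHS]big_nat.
  apply: ler_sum => k /andP[_ kn]; rewrite ltnS in kn.
  have QQ_le : Q n x * Q n.+1 x <= Q k x * Qalt k x.
    have := Qpoly_nonincreasing _ _ kn; have := Qpoly_nonincreasing _ _ (leqnSn n).
    by have := Qalt_ge _ kn; have := Qpoly_gt0 k; have := Qpoly_gt0 n.+1; nra.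
  have rpi_ge0 : 0 <= r k * pi k by rewrite mulr_ge0 // ltW ?pi_rw_gt0.
  by have := ler_wpM2l rpi_ge0 QQ_le; lra.
have seriesS : pi_series n.+1 = pi_series n + P^-1 * T.
  by rewrite /pi_series big_nat_recr //= [p n * _]mulrC.
have PT : P * (P^-1 * T) = T by rewrite mulrA divff ?mul1r // lt0r_neq0.
have Qn_gt0 := Qpoly_gt0 n; have Qn1_gt0 := Qpoly_gt0 n.+1.
rewrite seriesS -(ler_pM2l (mulr_gt0 P_gt0 Qn_gt0)).
have := ler_wpM2l (ltW (mulr_gt0 P_gt0 Qn1_gt0)) (IH n (leqnn n)).
by have := congr1 ( *%R^~ (Q n x * Q n.+1 x)) PT; rewrite /=; lra.
Qed.

Lemma Qpoly_ratio_cvgy :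
  pi_series n @[n --> \oo] --> +oo ->
  `| Q n (- x) / Q n x | @[n --> \oo] --> +oo.
Proof.
move=> series_cvgy; apply: (ger_cvgy _ series_cvgy); apply: nearW => n.
have Qn_gt0 := Qpoly_gt0 n; have := Qalt_ge_pi_series n; have := pi_series_ge0 n.
rewrite normrM normfV (gtr0_norm Qn_gt0) ler_pdivlMr //.
have -> : `| Q n (- x) | = `| Qalt n x |.
  by rewrite /Qalt normrM normrX normrN1 expr1n mul1r.
by move=> ? ?; apply: le_trans (ler_norm _); nra.
Qed.

End PositiveAt.
End ThreeTermRecurrence.

Lemma size_sub_coef_scale {F : fieldType} (P S : {poly F}) m :
  (size P <= m.+1)%N -> size S = m.+1 -> (size (P - (P`_m / S`_m) *: S)%R <= m)%N.
Proof.
move=> sizeP sizeS; have Sm_neq0 : S`_m != 0.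
  by rewrite -[m]/(m.+1.-1) -sizeS -lead_coefE lead_coef_eq0 -size_poly_eq0 sizeS.
apply/leq_sizeP => j; rewrite coefB coefZ leq_eqVlt => /orP[/eqP <-|mj].
  by rewrite divfK // subrr.
have /leq_sizeP P_j := sizeP; have /leq_sizeP S_j : (size S <= m.+1)%N by rewrite sizeS.
by rewrite (P_j j) // (S_j j) // mulr0 subrr.
Qed.

Lemma infinite_set_nonroot {F : idomainType} {S : set F} {P : {poly F}} :
  P != 0 -> infinite_set S -> exists2 x, S x & ~~ root P x.
Proof.
move=> P_neq0 S_inf; apply: contrapT => S_roots.
have [B BS sizeB] := infinite_set_fset (size P) S_inf.
have B_roots : all (root P) (finmap.enum_fset B).
  apply/allP => x xB; apply: contrapT => /negP x_nonroot.
  by apply: S_roots; exists x => //; exact: BS.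
have := max_poly_roots P_neq0 B_roots (finmap.fset_uniq B).
by rewrite ltnNge sizeB.
Qed.

Section SupportInInterval.
Context {R : realType}.
Variable psi : probability R R.
Hypothesis psi_itv : psi (~` `[-1, 1]) = 0%E.
Hypothesis supp_infinite : infinite_set (msupport psi).

Local Notation eta := (sup (msupport psi)).

Lemma msupport_itv : msupport psi `<=` `[-1, 1].
Proof. by apply: (msupport_sub psi) psi_itv; exact: itv_closed. Qed.

Lemma msupport_neq0 : msupport psi !=set0.
Proof. by apply/set0P/eqP => supp0; apply: supp_infinite; rewrite supp0. Qed.

Lemma sup_msupport_ub : ubound (msupport psi) eta.
Proof.
apply: ub_le_sup; exists 1 => y /msupport_itv /=.
by rewrite in_itv /= => /andP[].
Qed.

Lemma sup_msupport_itv : -1 <= eta <= 1.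
Proof.
have [x supp_x] := msupport_neq0.
have := msupport_itv _ supp_x; rewrite /= in_itv /= => /andP[x_ge _].
rewrite (le_trans x_ge (sup_msupport_ub _ supp_x)) /=.
by apply: ge_sup msupport_neq0 _ => y /msupport_itv; rewrite /= in_itv /= => /andP[].
Qed.

Lemma measure_notin_itv_sup : psi (~` `[-1, eta]%classic) = 0%E.
Proof.
have mC1 : measurable (~` `[-1, 1]%classic : set R).
  by apply: measurableC; exact: measurable_itv.
have right_null : psi `]eta, +oo[%classic = 0%E.
  apply: (measure_gt_sup_msupport psi 1 msupport_neq0).
  apply: subset_measure0 psi_itv => // x /=; rewrite !in_itv /= andbT => x_gt1.
  by rewrite [x <= 1]leNgt x_gt1 andbF.
have union_null : psi (~` `[-1, 1] `|` `]eta, +oo[) = 0%E.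
  by rewrite -psi_itv; apply: measureU0 => //; exact: measurable_itv.
apply: subset_measure0 union_null => //.
- by apply: measurableC; exact: measurable_itv.
- by apply: measurableU => //; exact: measurable_itv.
move=> x /=; rewrite !in_itv /= andbT => /negP; rewrite negb_and -!ltNge.
case/orP => x_lt; last by right.
by left => /andP[x_ge _]; move: x_lt; rewrite ltNge x_ge.
Qed.

End SupportInInterval.

Section Orthogonality.
Context {R : realType}.
Variables (p q r : nat -> R) (psi : probability R R).
Hypothesis p_gt0 : forall j, 0 < p j.
Hypothesis q_gt0 : forall j, 0 < q j.+1.
Hypothesis q0 : q 0 = 0.
Hypothesis pqr1 : forall j, p j + q j + r j = 1.
Hypothesis psi_itv : psi (~` `[-1, 1]) = 0%E.
Hypothesis supp_infinite : infinite_set (msupport psi).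
Hypothesis Qpoly_ortho : forall n m, n <> m ->
  (\int[psi]_x (Qpoly p q r n x * Qpoly p q r m x)%:E = 0)%E.

Local Notation Q := (Qpoly p q r).
Local Notation polyQ := (polyQ p q r).
Local Notation eta := (sup (msupport psi)).
Local Notation D := (`[-1, eta]%classic : set R).

Let mD : measurable D := measurable_itv _.

Lemma integrable_Qpoly_mul n (P : {poly R}) :
  psi.-integrable D (fun x => (Q n x * P.[x])%:E).
Proof.
have [_ eta_le1] := andP (sup_msupport_itv psi psi_itv supp_infinite).
have -> : (fun x => (Q n x * P.[x])%:E) = (fun x => ((polyQ n * P).[x])%:E).
  by apply/funext => x; rewrite hornerM horner_polyQ.
apply: integrable_horner mD _ => x /=; rewrite !in_itv /= => /andP[x_ge x_le].
by rewrite x_ge (le_trans x_le).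
Qed.

Lemma Qpoly_ortho_itv n m : n <> m ->
  (\int[psi]_(x in D) (Q n x * Q m x)%:E = 0)%E.
Proof.
move=> nm; rewrite -(integral_setC_null psi _ _ mD) ?Qpoly_ortho //.
  exact: measure_notin_itv_sup.
apply: measurableT_comp => //; apply: continuous_measurable_fun => x.
by apply: continuousM; apply: continuous_Qpoly.
Qed.

Lemma Qpoly_ortho_size n (P : {poly R}) : (size P <= n)%N ->
  (\int[psi]_(x in D) (Q n x * P.[x])%:E = 0)%E.
Proof.
move: P; suff ortho_le m : (m <= n)%N -> forall P : {poly R}, (size P <= m)%N ->
    (\int[psi]_(x in D) (Q n x * P.[x])%:E = 0)%E by move=> P; exact: ortho_le.
elim: m => [|m IH] mn P sizeP.
  move: sizeP; rewrite leqn0 size_poly_eq0 => /eqP ->.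
  by under eq_integral do rewrite horner0 mulr0; exact: integral0.
set c := P`_m / (polyQ m)`_m; set P' := P - c *: polyQ m.
have sizeP' : (size P' <= m)%N by rewrite size_sub_coef_scale // size_polyQ.
have -> : (\int[psi]_(x in D) (Q n x * P.[x])%:E =
    \int[psi]_(x in D) ((Q n x * P'.[x])%:E + c%:E * (Q n x * Q m x)%:E))%E.
  apply: eq_integral => x _; rewrite -EFinM -EFinD /P' hornerD hornerN hornerZ.
  by rewrite horner_polyQ; congr EFin; ring.
have integrable_QnQm : psi.-integrable D (fun x => (Q n x * Q m x)%:E).
  have -> : (fun x => (Q n x * Q m x)%:E) = (fun x => (Q n x * (polyQ m).[x])%:E).
    by apply/funext => x; rewrite horner_polyQ.
  exact: integrable_Qpoly_mul.
rewrite integralD ?integralZl ?IH ?(ltnW mn) ?Qpoly_ortho_itv ?mule0 ?adde0 //.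
- by move=> nm; rewrite nm ltnn in mn.
- exact: integrable_Qpoly_mul.
- exact: integrableZl.
Qed.

Lemma Qpoly_neq0_ge_sup n y : eta <= y -> Q n y != 0.
Proof.
move=> eta_y; apply/negP => /eqP Qny0.
have polyQ_neq0 : polyQ n != 0 by rewrite -size_poly_eq0 size_polyQ.
have [x0 supp_x0] := infinite_set_nonroot polyQ_neq0 supp_infinite.
have /factor_theorem[S QnE] : root (polyQ n) y by rewrite /root horner_polyQ Qny0.
have S_neq0 : S != 0 by apply: contraNneq polyQ_neq0; rewrite QnE => ->; rewrite mul0r.
have sizeS : (size S <= n)%N.
  have := size_polyQ p q r p_gt0 n; rewrite QnE size_mul ?polyXsubC_eq0 //.
  by rewrite size_XsubC addn2 => -[->].
have Qn_factor x : Q n x = S.[x] * (x - y).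
  by rewrite -horner_polyQ QnE hornerM hornerXsubC.
rewrite /root horner_polyQ Qn_factor mulf_eq0 negb_or subr_eq0 => /andP[Sx0 x0y].
have x0_lt_y : x0 < y.
  by rewrite lt_neqAle x0y (le_trans (sup_msupport_ub psi psi_itv _ supp_x0)).
have h_poly : (fun x => (y - x) * S.[x] ^+ 2) = horner ((y%:P - 'X) * S ^+ 2).
  by apply/funext => x; rewrite !hornerE.
have := Qpoly_ortho_size n (- S); rewrite size_opp => /(_ sizeS).
have -> : (fun x => (Q n x * (- S).[x])%:E) = (fun x => ((y - x) * S.[x] ^+ 2)%:E).
  by apply/funext => x; rewrite Qn_factor hornerN; congr EFin; ring.
move=> integral0; suff : (0 < \int[psi]_(x in D) ((y - x) * S.[x] ^+ 2)%:E)%E.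
  by rewrite integral0 ltxx.
apply: (integral_gt0_msupport psi _ _ x0 mD) => //.
- exact: measure_notin_itv_sup.
- by rewrite h_poly; exact: continuous_horner.
- move=> x /=; rewrite in_itv /= => /andP[_ x_le].
  by rewrite mulr_ge0 ?sqr_ge0 // subr_ge0 (le_trans x_le).
- by rewrite mulr_gt0 ?subr_gt0 // exprn_even_gt0.
Qed.

Lemma Qpoly_sup_gt0 n : 0 < Q n eta.
Proof.
rewrite ltNge; apply/negP => Qn_le0.
have [_ eta_le1] := andP (sup_msupport_itv psi psi_itv supp_infinite).
have [c] : exists2 c, c \in `[eta, 1] & Q n c = 0.
  apply: IVT => //; first exact/continuous_subspaceT/continuous_Qpoly.
  rewrite Qpoly_at1 //; apply/andP; split; first by rewrite ge_min Qn_le0.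
  by rewrite le_max ler01 orbT.
rewrite in_itv /= => /andP[eta_c _] Qnc0.
by have := Qpoly_neq0_ge_sup n _ eta_c; rewrite Qnc0 eqxx.
Qed.

End Orthogonality.

Theorem proposition1 (R : realType) (p q r : nat -> R)
  (psi : probability R R) :
  (forall j, 0 < p j) -> (forall j, 0 < q j.+1) -> (forall j, 0 <= r j) ->
  q 0 = 0 -> (forall j, p j + q j + r j = 1) ->
  (* psi is a Borel probability measure on [-1,1] with infinite support *)
  psi (~` `[-1, 1]) = 0%E ->
  infinite_set (msupport psi) ->
  (* the Q_n are orthogonal with respect to psi *)
  (forall n m, n <> m ->
     (\int[psi]_x (Qpoly p q r n x * Qpoly p q r m x)%:E = 0)%E) ->
  (fun N => \sum_(0 <= j < N)
       (p j * pi_rw p q j)^-1 * \sum_(0 <= k < j.+1) r k * pi_rw p q k)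
     @ \oo --> +oo ->
  let eta := sup (msupport psi) in
  (fun n => `| Qpoly p q r n (- eta) / Qpoly p q r n eta |) @ \oo --> +oo.
Proof.
move=> p_gt0 q_gt0 r_ge0 q0 pqr1 psi_itv supp_infinite Qpoly_ortho series_cvgy eta.
have [_ eta_le1] := andP (sup_msupport_itv psi psi_itv supp_infinite).
apply: Qpoly_ratio_cvgy series_cvgy => //.
exact: Qpoly_sup_gt0.
Qed.
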